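(* Let $P=MN_P$ be a standard parabolic subgroup, $\pi\in\Pi_{\mathrm{disc}}(M)$, $R$ a standard parabolic subgroup and $w\in{}_RW_P$. Let $Q$ be standard with $P_0\subset Q\subset R$ and $w'\in{}_QW^R_{R_w}\,w$ with $P_\pi\subset P_{w'}$. (1) For every $\varpi^\vee\in\hat\Delta_Q^{R,\vee}$, $\langle w'\nu^w_{w'},\varpi^\vee\rangle\le0$, with equality if and only if $\varpi^\vee\in w'\mathfrak a^G_{P_w}$. (2) The following are equivalent: (a) $P_w=P_{w'}$; (b) $(w'\nu^w_{w'})^R_Q=0$; (c) $w'\in W^R(R_w;Q)\,w$. (3) There exists $c_1>0$ such that for every $T\in\mathfrak a_0$ with $\langle\alpha,T\rangle\ge0$ for all $\alpha\in\Delta_0$, every standard $P_0\subset Q\subset R$ and every $w'\in{}_QW^R_{R_w}w\setminus W^R(R_w;Q)w$ with $P_\pi\subset P_{w'}$, one has $\langle(w'\nu^w_{w'})^R_Q,T\rangle\le-c_1d(T)$.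
   Context: $E/F$ is a quadratic extension of number fields, $G=\mathrm{Res}_{E/F}\mathrm{GL}_n$, $P_0$ the upper triangular Borel, $W\cong\mathfrak S_n$, $\mathfrak a_0\cong\mathbb R^n$ with standard inner product; $\Delta_0$ the simple roots, $d(T)=\min_{\alpha\in\Delta_0}\langle\alpha,T\rangle$. For standard $Q\subset R$: $\mathfrak a_Q^R=\mathfrak a_Q\cap\mathfrak a_0^R$, $\Delta_Q^R$ simple roots of $A_Q$ in $M_R\cap N_Q$, $\hat\Delta_Q^{R,\vee}$ the dual basis of $\mathfrak a_Q^R$; $\mu\mapsto\mu^R_Q$ is the orthogonal projection $\mathfrak a_0^*\to\mathfrak a_Q^{R,*}$. For standard $S,Q$: ${}_QW_S$ is the set of $w\in W$ with $M_S\cap w^{-1}P_0w=M_S\cap P_0$, $M_Q\cap wP_0w^{-1}=M_Q\cap P_0$, $S_w=(M_S\cap w^{-1}Qw)N_S$, $Q_w=(M_Q\cap wSw^{-1})N_Q$; superscript $R$ denotes the analogous objects for $M_R$ (Weyl group $W^R$); $W^R(S;Q)$ is the set of $w\in{}_QW^R_S$ with $M_S\subset w^{-1}M_Qw$. Here $R_w=(M_R\cap wPw^{-1})N_R$; for $w'$ as in the claim, $w'\in{}_QW_P$ and $P_{w'}\subset P_w\subset P$ (with $P_{w'}=(M\cap w'^{-1}Qw')N_P$). $\Pi_{\mathrm{disc}}(M)$: discrete automorphic representations with central character trivial on $A_M^\infty$; writing $M=\prod G_{n_i}$, $\pi=\boxtimes\pi_i$, Moeglin–Waldspurger gives $n_i=r_id_i$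 with $\pi_i$ the residual representation attached to $\sigma_i^{\otimes d_i}$, $\sigma_i$ cuspidal on $\mathrm{GL}_{r_i}$ over $E$; $P_\pi\subset P$ is the standard parabolic with $P_\pi\cap M=\prod P_{\pi_i}$, $P_{\pi_i}$ with Levi $\mathrm{GL}_{r_i}^{d_i}$. For $P_\pi\subset S\subset S'\subset P$, with $S\cap M=\prod S_i$, $S'\cap M=\prod S'_i$, $\nu_S^{S'}=(-\rho_{S_i}^{S'_i}/r_i)_i$. Then $\nu^w_{w'}=\nu^{P_w}_{P_{w'}}$. *)

(* Combinatorial model of G = Res_{E/F} GL_{n+1}:
   coordinates 'I_n.+1 of a_0 = K^(n+1) (standard inner product),
   simple roots alpha_i = e_i - e_{i+1} indexed by i : 'I_n,
   standard parabolic S  <->  D_S : {set 'I_n}, the simple roots of M_S,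
   W = S_{n+1} = {perm 'I_n.+1}, acting by (w x)_{w j} = x_j. *)
From HB Require Import structures.
From mathcomp Require Import all_boot all_order all_algebra all_fingroup.
Set Implicit Arguments. Unset Strict Implicit. Unset Printing Implicit Defensive.
Import Order.TTheory GRing.Theory Num.Theory.
Local Open Scope ring_scope.

Section Defs.
Variable K : realFieldType.
Variable n : nat.

Definition vec := {ffun 'I_n.+1 -> K}.

(* endpoints of the simple root alpha_i = e_i - e_{i+1} *)
Definition lo (i : 'I_n) : 'I_n.+1 := widen_ord (leqnSn n) i.
Definition hi (i : 'I_n) : 'I_n.+1 := lift ord0 i.

(* a and b lie in the same diagonal block of M_D, i.e. e_a - e_b is a root of M_D *)
Definition sameblk (D : {set 'I_n}) (a b : 'I_n.+1) : bool :=
  [forall i : 'I_n, ((minn a b <= i)%N && (i < maxn a b)%N) ==> (i \in D)].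

Definition eb (a : 'I_n.+1) : vec := [ffun j => (j == a)%:R].
Definition alpha (i : 'I_n) : vec := eb (lo i) - eb (hi i).
Definition dot (x y : vec) : K := \sum_j x j * y j.

Definition wact (w : {perm 'I_n.+1}) (x : vec) : vec := [ffun j => x ((w^-1)%g j)].

(* w \in _Q W_S : w maps positive roots of M_S to positive roots,
   w^-1 maps positive roots of M_Q to positive roots *)
Definition Wdc (Q S : {set 'I_n}) (w : {perm 'I_n.+1}) : bool :=
  [forall a : 'I_n.+1, forall b : 'I_n.+1, ((a < b)%N && sameblk S a b) ==> (w a < w b)%N] &&
  [forall a : 'I_n.+1, forall b : 'I_n.+1, ((a < b)%N && sameblk Q a b) ==> ((w^-1)%g a < (w^-1)%g b)%N].

(* the standard parabolic (M_S \cap w^-1 M_Q w) N_S  (i.e. S_w relative to Q) *)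
Definition paraw (S Q : {set 'I_n}) (w : {perm 'I_n.+1}) : {set 'I_n} :=
  [set i in S | sameblk Q (w (lo i)) (w (hi i))].

Definition inWR (R : {set 'I_n}) (u : {perm 'I_n.+1}) : bool :=
  [forall a : 'I_n.+1, sameblk R a (u a)].

Definition WdcR (R Q S : {set 'I_n}) (u : {perm 'I_n.+1}) : bool :=
  inWR R u && Wdc Q S u.

(* W^R(S;Q) : u \in _Q W^R_S with M_S \subset u^-1 M_Q u *)
Definition WRSQ (R S Q : {set 'I_n}) (u : {perm 'I_n.+1}) : bool :=
  WdcR R Q S u && [forall a : 'I_n.+1, forall b : 'I_n.+1, sameblk S a b ==> sameblk Q (u a) (u b)].

(* w' \in X w  (product u w of Weyl elements: first w, then u) *)
Definition rightmul (X : pred {perm 'I_n.+1}) (w w' : {perm 'I_n.+1}) : Prop :=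
  exists2 u, X u & forall a, w' a = u (w a).

(* combinatorial data of pi \in Pi_disc(M): P_pi (simple roots Dpi) and the
   function r (r a = r_i for coordinates a in the i-th block of M):
   P_pi \subset P, r constant on the blocks of M, and every block of M_{P_pi}
   inside the i-th block of M has size r_i. *)
Definition disc_data (P Dpi : {set 'I_n}) (r : 'I_n.+1 -> nat) : Prop :=
  [/\ Dpi \subset P,
      (forall a b, sameblk P a b -> r a = r b) &
      (forall a, #|[set b | sameblk Dpi a b]| = r a)].

(* rho_S^{S'} : half sum of positive roots in M_{S'} \cap N_S *)
Definition rho (S S' : {set 'I_n}) : vec :=
  [ffun j => 2^-1 * (\sum_(a : 'I_n.+1) \sum_(b : 'I_n.+1 | [&& (a < b)%N, sameblk S' a b & ~~ sameblk S a b])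
      (eb a - eb b)) j].

(* nu_S^{S'} = (- rho_{S_i}^{S'_i} / r_i)_i *)
Definition nu (r : 'I_n.+1 -> nat) (S S' : {set 'I_n}) : vec :=
  [ffun j => - rho S S' j / (r j)%:R].

(* a_Q^R = a_Q \cap a_0^R *)
Definition in_aQR (Q R : {set 'I_n}) (x : vec) : Prop :=
  (forall a b, sameblk Q a b -> x a = x b) /\
  (forall a, \sum_(b | sameblk R a b) x b = 0).

(* x is an element of the basis \hat\Delta_Q^{R,\vee} dual to \Delta_Q^R *)
Definition is_coweight (Q R : {set 'I_n}) (x : vec) : Prop :=
  exists2 i, i \in R :\: Q &
    in_aQR Q R x /\ (forall j, j \in R :\: Q -> dot (alpha j) x = (i == j)%:R).

Definition in_w_aG (S : {set 'I_n}) (w : {perm 'I_n.+1}) (x : vec) : Prop :=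
  exists2 y : vec, (forall a b, sameblk S a b -> y a = y b) /\ \sum_a y a = 0
                   & x = wact w y.

(* orthogonal projection a_0 -> a_Q^R (for Q \subset R):
   average over the Q-block minus average over the R-block *)
Definition avg (D : {set 'I_n}) (x : vec) (j : 'I_n.+1) : K :=
  (\sum_(k | sameblk D j k) x k) / (#|[set k | sameblk D j k]|)%:R.
Definition proj (Q R : {set 'I_n}) (x : vec) : vec :=
  [ffun j => avg Q x j - avg R x j].

Definition dominant (T : vec) : Prop := forall i, 0 <= dot (alpha i) T.

End Defs.

(* d(T) = min_{alpha \in Delta_0} <alpha, T>; convention d(T) = 0 when Delta_0 is empty (GL_1) *)
Definition dmin (K : realFieldType) (n : nat) : vec K n -> K :=
  match n return vec K n -> K with
  | 0 => fun _ => 0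
  | m.+1 => fun T => \big[Num.min/ dot (@alpha K m.+1 ord0) T]_(i < m.+1) dot (@alpha K m.+1 i) T
  end.

(* Let S = P_w' (= [paraw P Q w']) and mu = w' nu.  Everything is read off the partial
   sums [psum mu i] = sum_(k <= i) mu_k, the pairings of mu with the fundamental coweights
   of GL.  Since nu = - rho_S^(P_w) / r, [psum mu i] is -1/2 times the sum, over the positive
   roots e_a - e_b of M_(P_w) that are not roots of M_S, of ([w' a <= i] - [w' b <= i]) / r_a.
   As w' = u w increases on the blocks of P_w, every term is nonnegative, so [psum mu i <= 0];
   a simple root of P_w outside S has its two images under w' separated by some i outside Q,
   and then [psum mu i <= - 1 / (2 (n + 1))].
   By summation by parts, the coweight of \hat\Delta_Q^R dual to alpha_i pairs with mu to
   [psum mu i], and <proj mu, T> = sum_i [psum mu i] <alpha_i, avg_Q T>, where avg_Q T is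
   dominant and <alpha_i, avg_Q T> >= <alpha_i, T> >= d(T) for i outside Q.  This gives (1)
   and (3); pairing proj mu with the indicator of {k <= i} for such an i gives (2). *)

From mathcomp Require Import all_boot all_order all_algebra all_fingroup.
From mathcomp Require Import zify ring.
Set Implicit Arguments. Unset Strict Implicit. Unset Printing Implicit Defensive.
Import Order.TTheory GRing.Theory Num.Theory.

Section Blocks.
Variable n : nat.
Implicit Types (D : {set 'I_n}) (a b c d : 'I_n.+1).

Lemma sameblkP D a b :
  reflect (forall i : 'I_n, (minn a b <= i < maxn a b)%N -> i \in D) (sameblk D a b).
Proof.
apply: (iffP forallP) => H i; first by move=> Hi; exact: (implyP (H i) Hi).
by apply/implyP => Hi; exact: H.
Qed.

Lemma sameblkC D a b : sameblk D a b = sameblk D b a.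
Proof. by rewrite /sameblk minnC maxnC. Qed.

Lemma sameblk_sym D a b : sameblk D a b -> sameblk D b a.
Proof. by rewrite sameblkC. Qed.

Lemma sameblk_refl D a : sameblk D a a.
Proof. by apply/sameblkP => i; lia. Qed.

Lemma sameblk_trans D a b c : sameblk D a b -> sameblk D b c -> sameblk D a c.
Proof.
move=> /sameblkP Hab /sameblkP Hbc; apply/sameblkP => i Hi.
have [inab | notab] := boolP (minn a b <= i < maxn a b)%N; first exact: Hab.
by apply: Hbc; lia.
Qed.

Lemma sameblk_subinterval D a b c d :
  (minn a b <= minn c d)%N -> (maxn c d <= maxn a b)%N ->
  sameblk D a b -> sameblk D c d.
Proof. by move=> h1 h2 /sameblkP H; apply/sameblkP => i Hi; apply: H; lia. Qed.

Lemma sameblkS D D' a b : D \subset D' -> sameblk D a b -> sameblk D' a b.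
Proof. by move=> /subsetP sDD' /sameblkP H; apply/sameblkP => i /H /sDD'. Qed.

Lemma val_lo (j : 'I_n) : lo j = j :> nat.
Proof. by []. Qed.

Lemma val_hi (j : 'I_n) : hi j = j.+1 :> nat.
Proof. by rewrite /hi /= /bump leq0n. Qed.

Lemma lo_inord (j : 'I_n) : lo j = inord j.
Proof. by apply: val_inj; rewrite /= inordK //; have := ltn_ord j; lia. Qed.

Lemma hi_inord (j : 'I_n) : hi j = inord j.+1.
Proof. by apply: val_inj; rewrite /= /bump /= inordK //; have := ltn_ord j; lia. Qed.

Lemma sameblk_lohi D (j : 'I_n) : sameblk D (lo j) (hi j) = (j \in D).
Proof.
apply/sameblkP/idP => [H | jD i]; first by apply: H; rewrite val_lo val_hi; lia.
rewrite val_lo val_hi => Hi.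
by have -> : i = j by apply: val_inj => /=; lia.
Qed.

Lemma sameblk_prefix D a b (i : 'I_n) :
  sameblk D a b -> i \notin D -> (a <= i)%N = (b <= i)%N.
Proof.
move=> /sameblkP sab iD; apply/idP/idP => h; apply: contraNT iD; rewrite -ltnNge => h'.
  by apply: sab; lia.
by apply: sab; lia.
Qed.

Lemma sameblk_ind D (E : 'I_n.+1 -> 'I_n.+1 -> Prop) :
  (forall a, E a a) ->
  (forall a b c, (a <= b <= c)%N -> E a b -> E b c -> E a c) ->
  (forall j : 'I_n, j \in D -> E (lo j) (hi j)) ->
  forall a b, (a <= b)%N -> sameblk D a b -> E a b.
Proof.
move=> Erefl Etrans Eroot.
suff H k a b : b = a + k :> nat -> sameblk D a b -> E a b.
  by move=> a b ab; apply: (H (b - a)%N); lia.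
elim: k a b => [|k IH] a b hb sab.
  by have -> : b = a by apply: val_inj => /=; rewrite hb addn0.
have hc : (b.-1 < n.+1)%N by have := ltn_ord b; lia.
have hj : (b.-1 < n)%N by have := ltn_ord b; lia.
pose j : 'I_n := Ordinal hj.
have lo_j : lo j = Ordinal hc by apply: val_inj.
have hi_j : hi j = b by apply: val_inj; have := val_hi j; rewrite /= => ->; lia.
apply: (Etrans a (lo j) b); first by rewrite val_lo /=; lia.
  by apply: IH; rewrite ?val_lo /=; [lia | apply: sameblk_subinterval sab => /=; lia].
by rewrite -hi_j; apply: Eroot; move/sameblkP: sab; apply => /=; lia.
Qed.

Lemma sameblk_equiv_ind D (E : 'I_n.+1 -> 'I_n.+1 -> Prop) :
  (forall a, E a a) -> (forall a b, E a b -> E b a) ->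
  (forall a b c, E a b -> E b c -> E a c) ->
  (forall j : 'I_n, j \in D -> E (lo j) (hi j)) ->
  forall a b, sameblk D a b -> E a b.
Proof.
move=> Erefl Esym Etrans Eroot a b sab.
have Etrans' a' b' c' : (a' <= b' <= c')%N -> E a' b' -> E b' c' -> E a' c'.
  by move=> _; apply: Etrans.
have [ab | ba] := leqP a b; first exact: (sameblk_ind Erefl Etrans' Eroot).
by apply/Esym/(sameblk_ind Erefl Etrans' Eroot (ltnW ba)); rewrite sameblkC.
Qed.

Definition block D a : {set 'I_n.+1} := [set k | sameblk D a k].

Lemma block_eq D a b : sameblk D a b -> block D a = block D b.
Proof.
move=> sab; apply/setP => k; rewrite !inE.
by apply/idP/idP; apply: sameblk_trans; rewrite // sameblkC.
Qed.

Lemma block_card_gt0 D a : (0 < #|block D a|)%N.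
Proof. by rewrite card_gt0; apply/set0Pn; exists a; rewrite inE sameblk_refl. Qed.

End Blocks.

Section Permutations.
Variable n : nat.
Implicit Types (Q S : {set 'I_n}) (a b : 'I_n.+1) (s : {perm 'I_n.+1}).
Local Open Scope group_scope.

Lemma Wdc_incr Q S s : Wdc Q S s -> forall a b, (a < b)%N -> sameblk S a b -> (s a < s b)%N.
Proof.
by case/andP=> /forallP H _ a b ab sab; have /forallP/(_ b)/implyP := H a; apply; rewrite ab.
Qed.

Lemma Wdc_inv Q S s : Wdc Q S s = Wdc S Q s^-1.
Proof. by rewrite /Wdc invgK andbC. Qed.

Lemma Wdc_incrV Q S s :
  Wdc Q S s -> forall a b, (a < b)%N -> sameblk Q a b -> (s^-1 a < s^-1 b)%N.
Proof. by rewrite Wdc_inv; apply: Wdc_incr. Qed.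

Lemma paraw_sub S Q s : paraw S Q s \subset S.
Proof. by apply/subsetP => j; rewrite inE => /andP[]. Qed.

Lemma paraw_sameblk S Q s a b : sameblk (paraw S Q s) a b -> sameblk Q (s a) (s b).
Proof.
move: a b; apply: sameblk_equiv_ind => [a|a b|a b c|j].
- exact: sameblk_refl.
- exact: sameblk_sym.
- exact: sameblk_trans.
- by rewrite inE => /andP[].
Qed.

Lemma inWR_sameblk R u a b : inWR R u -> sameblk R (u a) (u b) = sameblk R a b.
Proof.
move=> /forallP uR; apply/idP/idP => sab.
  exact: sameblk_trans (uR a) (sameblk_trans sab (sameblk_sym (uR b))).
exact: sameblk_trans (sameblk_sym (uR a)) (sameblk_trans sab (uR b)).
Qed.

(* Nothing fits strictly between [s (lo j)] and [s (hi j)]: its preimage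
   would lie strictly between [lo j] and [hi j]. *)
Lemma incr_lohi_adjacent D1 D2 s :
  (forall a b, (a < b)%N -> sameblk D1 a b -> (s a < s b)%N) ->
  (forall a b, (a < b)%N -> sameblk D2 a b -> (s^-1 a < s^-1 b)%N) ->
  forall j : 'I_n, j \in D1 -> sameblk D2 (s (lo j)) (s (hi j)) ->
  s (hi j) = (s (lo j)).+1 :> nat.
Proof.
move=> incr incrV j jD1 sD2.
have lt : (s (lo j) < s (hi j))%N by apply: incr; rewrite ?sameblk_lohi // val_lo val_hi.
have [gap|] := ltnP (s (lo j)).+1 (s (hi j)); last lia.
have hz : ((s (lo j)).+1 < n.+1)%N by have := ltn_ord (s (hi j)); lia.
pose z : 'I_n.+1 := Ordinal hz.
have : (lo j < s^-1 z)%N.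
  have := incrV (s (lo j)) z; rewrite permK; apply => /=; first lia.
  by apply: sameblk_subinterval sD2 => /=; lia.
have : (s^-1 z < hi j)%N.
  have := incrV z (s (hi j)); rewrite permK; apply => /=; first lia.
  by apply: sameblk_subinterval sD2 => /=; lia.
by rewrite val_lo val_hi; lia.
Qed.

Lemma paraw_root_image P R w (j : 'I_n) : Wdc R P w -> j \in paraw P R w ->
  exists x : 'I_n, [/\ x \in paraw R P w^-1, lo x = w (lo j) & hi x = w (hi j)].
Proof.
move=> hW jPw; have := jPw; rewrite inE => /andP[jP sR].
have step := incr_lohi_adjacent (Wdc_incr hW) (Wdc_incrV hW) jP sR.
have hx : (w (lo j) < n)%N by have := ltn_ord (w (hi j)); lia.
pose x : 'I_n := Ordinal hx.
have lo_x : lo x = w (lo j) by apply: val_inj.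
have hi_x : hi x = w (hi j) by apply: val_inj; have := val_hi x; rewrite /= => ->.
exists x; split => //.
by rewrite inE -!sameblk_lohi lo_x hi_x sR !permK sameblk_lohi.
Qed.

Lemma paraw_root_preimage P R w (x : 'I_n) : Wdc R P w -> x \in paraw R P w^-1 ->
  exists j : 'I_n, [/\ j \in paraw P R w, w (lo j) = lo x & w (hi j) = hi x].
Proof.
rewrite Wdc_inv => hW /(paraw_root_image hW) [j]; rewrite invgK => -[jPw lo_j hi_j].
by exists j; rewrite lo_j hi_j !permKV.
Qed.

End Permutations.

Section Wprime.
Variable n : nat.
Variables (P R Q : {set 'I_n}) (w u w' : {perm 'I_n.+1}).
Implicit Types (a b : 'I_n.+1) (j : 'I_n).
Hypotheses (hW : Wdc R P w) (hu : WdcR R Q (paraw R P (w^-1)%g) u)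
  (w'E : forall a, w' a = u (w a)) (QR : Q \subset R).
Local Notation Pw := (paraw P R w).
Local Notation Rw := (paraw R P (w^-1)%g).
Local Notation Sw := (paraw P Q w').

Let uR : inWR R u. Proof. by case/andP: hu. Qed.

Lemma w'_lohi_lt j : j \in Pw -> (w' (lo j) < w' (hi j))%N.
Proof.
case/(paraw_root_image hW) => x [xRw lo_x hi_x]; rewrite !w'E -lo_x -hi_x.
by case/andP: hu => _ /Wdc_incr; apply; rewrite ?sameblk_lohi // val_lo val_hi.
Qed.

Lemma w'_incr a b : (a <= b)%N -> sameblk Pw a b -> (w' a <= w' b)%N.
Proof.
move: a b; apply: sameblk_ind => // [a b c _|j /w'_lohi_lt/ltnW //].
exact: leq_trans.
Qed.

Lemma w'_sameblk_R a b : sameblk Pw a b -> sameblk R (w' a) (w' b).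
Proof. by move=> /paraw_sameblk; rewrite !w'E (inWR_sameblk _ _ uR). Qed.

Lemma Sw_sub_Pw : Sw \subset Pw.
Proof.
apply/subsetP => j; rewrite !inE => /andP[jP sQ]; rewrite jP /=.
by rewrite -(inWR_sameblk _ _ uR) -!w'E (sameblkS QR sQ).
Qed.

Lemma Pw_eq_Sw_WRSQ : Pw = Sw <-> rightmul (WRSQ R Rw Q) w w'.
Proof.
split=> [PwSw | [v hv w'Ev]].
  exists u => //; rewrite /WRSQ hu /=; apply/forallP => a; apply/forallP => b.
  apply/implyP; move: a b; apply: sameblk_equiv_ind => [a|a b|a b c|x xRw].
  - exact: sameblk_refl.
  - exact: sameblk_sym.
  - exact: sameblk_trans.
  have [j [jPw lo_j hi_j]] := paraw_root_preimage hW xRw.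
  by move: jPw; rewrite PwSw inE !w'E lo_j hi_j => /andP[].
apply/eqP; rewrite eqEsubset Sw_sub_Pw andbT; apply/subsetP => j jPw.
have [x [xRw lo_x hi_x]] := paraw_root_image hW jPw.
move: hv; rewrite /WRSQ => /andP[_ /forallP/(_ (lo x))/forallP/(_ (hi x))/implyP].
rewrite sameblk_lohi lo_x hi_x -!w'Ev => /(_ xRw) sQ.
by rewrite inE sQ andbT (subsetP (paraw_sub _ _ _) _ jPw).
Qed.

End Wprime.

Local Open Scope ring_scope.

Section Vectors.
Variables (K : realFieldType) (n : nat).
Local Notation vec := (vec K n).
Implicit Types (x y T : vec) (D : {set 'I_n}) (a b : 'I_n.+1) (i : 'I_n).

Definition psum x i : K := \sum_(k : 'I_n.+1 | (k <= i)%N) x k.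
Definition prefix i : vec := [ffun k : 'I_n.+1 => ((k <= i)%N)%:R].
Definition avgv D x : vec := [ffun a => avg D x a].

Lemma sum_mul_delta (F : 'I_n.+1 -> K) a : \sum_k F k * (k == a)%:R = F a.
Proof. by rewrite (bigD1 a) //= eqxx mulr1 big1 ?addr0 // => k /negbTE ->; rewrite mulr0. Qed.

Lemma dot_alpha i y : dot (alpha K i) y = y (lo i) - y (hi i).
Proof.
rewrite /dot; under eq_bigr do rewrite !ffunE mulrBl.
by rewrite sumrB; under eq_bigr do rewrite mulrC; rewrite sum_mul_delta;
   under eq_bigr do rewrite mulrC; rewrite sum_mul_delta.
Qed.

Lemma dot_sum_roots (C : rel 'I_n.+1) (F : 'I_n.+1 -> K) :
  \sum_k F k * (\sum_a \sum_(b | C a b) (eb K a - eb K b)) k =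
  \sum_a \sum_(b | C a b) (F a - F b).
Proof.
under eq_bigr do rewrite sum_ffunE mulr_sumr.
rewrite exchange_big; apply: eq_bigr => a _.
under eq_bigr do rewrite sum_ffunE mulr_sumr.
rewrite exchange_big; apply: eq_bigr => b _.
by under eq_bigr do rewrite !ffunE mulrBr; rewrite sumrB !sum_mul_delta.
Qed.

Lemma telescope_alpha y (k : 'I_n.+1) :
  \sum_(i : 'I_n | (k <= i)%N) (y (lo i) - y (hi i)) = y k - y ord_max.
Proof.
pose g m := y (inord m).
have -> : \sum_(i : 'I_n | (k <= i)%N) (y (lo i) - y (hi i)) = \sum_(k <= m < n) (g m - g m.+1).
  by rewrite big_geq_mkord; apply: eq_bigr => i _; rewrite /g lo_inord hi_inord.
rewrite -[LHS]opprK -sumrN; under eq_bigr do rewrite opprB.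
rewrite telescope_sumr; last by have := ltn_ord k; lia.
rewrite opprB /g inord_val; congr (_ - y _); exact/val_inj/inordK.
Qed.

Lemma dot_by_parts x y :
  dot x y = \sum_i psum x i * (y (lo i) - y (hi i)) + (\sum_k x k) * y ord_max.
Proof.
transitivity (\sum_k (x k * (y k - y ord_max) + x k * y ord_max)).
  by apply: eq_bigr => k _; rewrite -mulrDr subrK.
rewrite big_split /= -mulr_suml; congr (_ + _).
under [RHS]eq_bigr do rewrite /psum big_mkcond mulr_suml.
rewrite exchange_big /=; apply: eq_bigr => k _.
rewrite -telescope_alpha mulr_sumr big_mkcond; apply: eq_bigr => i _.
by case: ifP; rewrite ?mul0r ?mulr0.
Qed.

Lemma dot_prefix x i : dot x (prefix i) = psum x i.
Proof.
rewrite /psum big_mkcond; apply: eq_bigr => k _; rewrite ffunE.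
by case: ifP; rewrite ?mulr1 ?mulr0.
Qed.

Lemma dot0l y : dot 0 y = 0.
Proof. by rewrite /dot big1 // => k _; rewrite ffunE mul0r. Qed.

Lemma avgE D x a : avg D x a = (\sum_(k in block D a) x k) / #|block D a|%:R.
Proof. by rewrite /avg; congr (_ / _); apply: eq_bigl => k; rewrite inE. Qed.

Lemma avg_eq D x a b : sameblk D a b -> avg D x a = avg D x b.
Proof. by move=> sab; rewrite !avgE (block_eq sab). Qed.

Lemma sum_block_const D a (c : K) : \sum_(k in block D a) c = c * #|block D a|%:R.
Proof. by rewrite sumr_const mulr_natr. Qed.

Lemma avg_const D x a c : (forall k, sameblk D a k -> x k = c) -> avg D x a = c.
Proof.
move=> xc; rewrite avgE (eq_bigr (fun _ => c)) => [|k]; last by rewrite inE => /xc.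
by rewrite sum_block_const mulfK // pnatr_eq0 -lt0n block_card_gt0.
Qed.

Lemma avg_ge D x a c : (forall k, sameblk D a k -> c <= x k) -> c <= avg D x a.
Proof.
move=> cx; rewrite avgE ler_pdivlMr ?ltr0n ?block_card_gt0 // -sum_block_const.
by apply: ler_sum => k; rewrite inE => /cx.
Qed.

Lemma avg_le D x a c : (forall k, sameblk D a k -> x k <= c) -> avg D x a <= c.
Proof.
move=> xc; rewrite avgE ler_pdivrMr ?ltr0n ?block_card_gt0 // -sum_block_const.
by apply: ler_sum => k; rewrite inE => /xc.
Qed.

Lemma dot_avgv D x y : dot (avgv D x) y = dot x (avgv D y).
Proof.
pose m a b : K := if sameblk D a b then #|block D a|%:R^-1 else 0.
have avgvE z a : avgv D z a = \sum_b m a b * z b.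
  rewrite ffunE avgE mulr_suml big_mkcond; apply: eq_bigr => b _.
  by rewrite /m inE; case: ifP; rewrite ?mul0r // mulrC.
have mC a b : m a b = m b a by rewrite /m sameblkC; case: ifP => // /block_eq ->.
rewrite /dot; under eq_bigr do rewrite avgvE mulr_suml.
under [RHS]eq_bigr do rewrite avgvE mulr_sumr.
rewrite exchange_big; apply: eq_bigr => a _; apply: eq_bigr => b _.
by rewrite mC mulrCA mulrA.
Qed.

Lemma sum_avgv D x : \sum_a avgv D x a = \sum_a x a.
Proof.
pose one : vec := [ffun _ => 1].
have avgv_one : avgv D one = one.
  by apply/ffunP => a; rewrite !ffunE; apply: avg_const => k; rewrite ffunE.
have dot_one z : dot z one = \sum_a z a by apply: eq_bigr => a _; rewrite ffunE mulr1.
by rewrite -!dot_one dot_avgv avgv_one.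
Qed.

Lemma dominant_antitone T a b : dominant T -> (a <= b)%N -> T b <= T a.
Proof.
move=> domT ab; have sab : sameblk setT a b by apply/sameblkP => i; rewrite in_setT.
move: a b ab sab; apply: sameblk_ind => // [a b c _ Tab Tbc|j _].
  exact: le_trans Tbc Tab.
by rewrite -subr_ge0 -dot_alpha.
Qed.

Lemma dot_alpha_avgv_ge D T i : dominant T -> i \notin D ->
  dot (alpha K i) T <= dot (alpha K i) (avgv D T).
Proof.
move=> domT iD; rewrite !dot_alpha !ffunE lerB //.
  apply: avg_ge => k /sameblk_prefix/(_ iD) lo_k; apply: dominant_antitone => //.
  by rewrite val_lo -lo_k val_lo.
apply: avg_le => k /sameblk_prefix/(_ iD) hi_k; apply: dominant_antitone => //.
by rewrite val_hi ltnNge -hi_k val_hi ltnn.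
Qed.

Lemma avgv_dominant D T : dominant T -> dominant (avgv D T).
Proof.
move=> domT i; have [iD | iD] := boolP (i \in D).
  by rewrite dot_alpha !ffunE (@avg_eq D T (lo i) (hi i)) ?sameblk_lohi ?subrr.
exact: le_trans (domT i) (dot_alpha_avgv_ge domT iD).
Qed.

Lemma avgv_prefix D i : i \notin D -> avgv D (prefix i) = prefix i.
Proof.
move=> iD; apply/ffunP => a; rewrite ffunE; apply: avg_const => k sak.
by rewrite !ffunE (sameblk_prefix sak iD).
Qed.

End Vectors.

Lemma dmin_le (K : realFieldType) n (T : vec K n) (i : 'I_n) : dmin T <= dot (alpha K i) T.
Proof. by case: n T i => [|m] T i; [case: i | exact: bigmin_le]. Qed.

Section Exponent.
Variables (K : realFieldType) (n : nat).
Variables (P R Q : {set 'I_n}) (w u w' : {perm 'I_n.+1}) (r : 'I_n.+1 -> nat).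
Hypotheses (hW : Wdc R P w) (hu : WdcR R Q (paraw R P (w^-1)%g) u)
  (w'E : forall a, w' a = u (w a)) (QR : Q \subset R).
Hypotheses (r_const : forall a b, sameblk P a b -> r a = r b)
  (r_gt0 : forall a, (0 < r a)%N) (r_le : forall a, (r a <= n.+1)%N).
Local Notation vec := (vec K n).
Local Notation Pw := (paraw P R w).
Local Notation Sw := (paraw P Q w').
Local Notation mu := (wact w' (nu K r Sw Pw)).
Implicit Types (a b : 'I_n.+1) (i j : 'I_n) (X : pred 'I_n.+1).

Definition rho_root a b := [&& (a < b)%N, sameblk Pw a b & ~~ sameblk Sw a b].

Definition rho_term X a b : K := ((X (w' a))%:R - (X (w' b))%:R) / (r a)%:R.

Lemma rho_root_r a b : rho_root a b -> r a = r b.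
Proof. by case/and3P => _ sab _; apply/r_const/(sameblkS (paraw_sub _ _ _) sab). Qed.

Lemma sum_muE X :
  \sum_(k | X k) mu k = - (2^-1 * \sum_a \sum_(b | rho_root a b) rho_term X a b).
Proof.
rewrite big_mkcond (reindex_inj (@perm_inj _ w')) /=.
pose F a : K := (X (w' a))%:R / (r a)%:R.
have muE a : (if X (w' a) then mu (w' a) else 0) =
    - (2^-1 * (F a * (\sum_a \sum_(b | rho_root a b) (eb K a - eb K b)) a)).
  by rewrite /F !ffunE permK; case: (X (w' a)) => /=; ring.
under eq_bigr do rewrite muE.
rewrite sumrN -mulr_sumr dot_sum_roots; congr (- (_ * _)).
apply: eq_bigr => a _; apply: eq_bigr => b /rho_root_r rab.
by rewrite /F /rho_term rab mulrBl.
Qed.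

Definition down_closed X := forall a b, rho_root a b -> X (w' b) -> X (w' a).

Lemma rho_term_ge0 X a b : down_closed X -> rho_root a b -> 0 <= rho_term X a b.
Proof.
move=> /(_ a b) Xdown rab; apply: divr_ge0 => //; rewrite subr_ge0 ler_nat.
by move: (Xdown rab); case: (X (w' a)); case: (X (w' b)) => // /(_ isT).
Qed.

Lemma sum_rho_term_ge0 X a : down_closed X -> 0 <= \sum_(b | rho_root a b) rho_term X a b.
Proof. by move=> Xdown; apply: sumr_ge0 => b; apply: rho_term_ge0. Qed.

Lemma sum_mu_le0 X : down_closed X -> \sum_(k | X k) mu k <= 0.
Proof.
move=> Xdown; rewrite sum_muE oppr_le0 mulr_ge0 ?invr_ge0 ?ler0n //.
by apply: sumr_ge0 => a _; apply: sum_rho_term_ge0.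
Qed.

Lemma sum_mu_eq0 X : (forall a b, rho_root a b -> X (w' a) = X (w' b)) ->
  \sum_(k | X k) mu k = 0.
Proof.
move=> Xconst; rewrite sum_muE big1 ?mulr0 ?oppr0 // => a _.
by rewrite big1 // => b /Xconst Xab; rewrite /rho_term Xab subrr mul0r.
Qed.

Lemma sum_mu_eq0_inv X : down_closed X -> \sum_(k | X k) mu k = 0 ->
  forall a b, rho_root a b -> X (w' a) = X (w' b).
Proof.
move=> Xdown /eqP; rewrite sum_muE oppr_eq0 mulf_eq0 invr_eq0 pnatr_eq0 /= => /eqP sum0 a b rab.
have /(psumr_eq0P (fun a _ => sum_rho_term_ge0 a Xdown))/(_ a isT) := sum0.
move=> /(psumr_eq0P (fun b => rho_term_ge0 Xdown))/(_ b rab) /eqP.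
rewrite mulf_eq0 invr_eq0 pnatr_eq0 eqn0Ngt r_gt0 orbF subr_eq0 eqr_nat.
by case: (X (w' a)); case: (X (w' b)).
Qed.

(* A root [rho_root a b] separated by [X] contributes [1 / (2 r_a) >= 1 / (2 (n + 1))]
   to [- \sum_(k | X k) mu k]. *)
Definition c1 : K := 2^-1 / (n.+1)%:R.

Lemma sum_mu_gap X a b : down_closed X -> rho_root a b -> X (w' a) -> ~~ X (w' b) ->
  \sum_(k | X k) mu k <= - c1.
Proof.
move=> Xdown rab Xa nXb; rewrite sum_muE /c1 lerN2 ler_pM2l ?invr_gt0 ?ltr0n //.
have term_ge : (n.+1)%:R^-1 <= rho_term X a b.
  by rewrite /rho_term Xa (negbTE nXb) subr0 mul1r lef_pV2 ?posrE ?ltr0n ?ler_nat.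
have inner_ge : rho_term X a b <= \sum_(c | rho_root a c) rho_term X a c.
  by rewrite (bigD1 b rab) lerDl sumr_ge0 // => c /andP[rac _]; apply: rho_term_ge0.
have outer_ge : \sum_(c | rho_root a c) rho_term X a c <=
    \sum_a' \sum_(c | rho_root a' c) rho_term X a' c.
  by rewrite [X in _ <= X](bigD1 a) //= lerDl sumr_ge0 // => a' _; apply: sum_rho_term_ge0.
exact: le_trans term_ge (le_trans inner_ge outer_ge).
Qed.

Lemma c1_gt0 : 0 < c1.
Proof. by rewrite divr_gt0 ?invr_gt0 ?ltr0n. Qed.

Lemma prefix_down_closed i : down_closed (fun k => (k <= i)%N).
Proof. by move=> a b /and3P[ab sab _]; have := w'_incr hW hu w'E (ltnW ab) sab; lia. Qed.

Lemma psum_mu_le0 i : psum mu i <= 0.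
Proof. exact/sum_mu_le0/prefix_down_closed. Qed.

Lemma psum_mu_notin_R i : i \notin R -> psum mu i = 0.
Proof.
move=> iR; apply: sum_mu_eq0 => a b /and3P[_ sab _].
exact: sameblk_prefix (w'_sameblk_R hu w'E sab) iR.
Qed.

Lemma sumr_mu_eq0 : \sum_a mu a = 0.
Proof. exact: (@sum_mu_eq0 xpredT). Qed.

Lemma proj_mu : proj Q R mu = avgv Q mu.
Proof.
apply/ffunP => c; rewrite !ffunE [avg R mu c]/avg sum_mu_eq0 ?mul0r ?subr0 // => a b.
case/and3P => _ /(w'_sameblk_R hu w'E) sR _.
by apply/idP/idP => sc; [exact: sameblk_trans sc sR | exact: sameblk_trans sc (sameblk_sym sR)].
Qed.

Lemma dot_proj_mu y : dot (proj Q R mu) y = dot mu (avgv Q y).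
Proof. by rewrite proj_mu dot_avgv. Qed.

Lemma psum_mu_gap j : j \in Pw -> j \notin Sw -> exists2 i, i \notin Q & psum mu i <= - c1.
Proof.
move=> jPw jSw; have jP := subsetP (paraw_sub _ _ _) j jPw.
have : ~~ sameblk Q (w' (lo j)) (w' (hi j)) by move: jSw; rewrite inE jP.
rewrite /sameblk negb_forall => /existsP[i]; rewrite negb_imply => /andP[sep iQ].
have lt_j := w'_lohi_lt hW hu w'E jPw.
exists i => //; rewrite /psum.
apply: (sum_mu_gap (@prefix_down_closed i) (a := lo j) (b := hi j)) => /=.
- by rewrite /rho_root val_lo val_hi ltnSn !sameblk_lohi jPw.
- by move: sep; rewrite /minn lt_j; lia.
- by move: sep; rewrite /maxn lt_j; lia.
Qed.

Section Coweight.
Variables (varpi : vec) (i : 'I_n).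
Hypotheses (iRQ : i \in R :\: Q)
  (varpi_Q : forall a b, sameblk Q a b -> varpi a = varpi b)
  (varpi_R : forall a, \sum_(b | sameblk R a b) varpi b = 0)
  (varpi_dual : forall j, j \in R :\: Q -> dot (alpha K j) varpi = (i == j)%:R).

Let iR : i \in R. Proof. by case/setDP: iRQ. Qed.
Let iQ : i \notin Q. Proof. by case/setDP: iRQ. Qed.

Lemma dot_alpha_coweight j : j \in R -> dot (alpha K j) varpi = (i == j)%:R.
Proof.
move=> jR; have [jQ | jQ] := boolP (j \in Q); last by rewrite varpi_dual // inE jQ.
rewrite dot_alpha (@varpi_Q (lo j) (hi j)) ?sameblk_lohi // subrr.
by case: eqP => // ij; move: iQ; rewrite ij jQ.
Qed.

Lemma dot_mu_coweight : dot mu varpi = psum mu i.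
Proof.
rewrite dot_by_parts sumr_mu_eq0 mul0r addr0 (bigD1 i) //= big1 => [|k ki].
  by rewrite -dot_alpha dot_alpha_coweight // eqxx mulr1 addr0.
have [kR | kR] := boolP (k \in R); last by rewrite psum_mu_notin_R // mul0r.
by rewrite -dot_alpha dot_alpha_coweight // eq_sym (negbTE ki) mulr0.
Qed.

Lemma coweight_diff a b : (a <= b)%N -> sameblk R a b ->
  varpi a - varpi b = ((a <= i) && (i < b))%N%:R.
Proof.
move: a b; apply: sameblk_ind => [a | a b c /andP[ab bc] ab_diff bc_diff | j jR].
- by rewrite subrr ltnNge andbN.
- rewrite -[LHS](subrKA (varpi b)) addrC ab_diff bc_diff -natrD; congr (_%:R).
  by case: (leqP a i); case: (leqP b i); case: (leqP c i) => //=; lia.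
- by rewrite -dot_alpha dot_alpha_coweight // val_lo val_hi ltnS -eqn_leq eq_sym.
Qed.

Lemma coweight_sum : \sum_a varpi a = 0.
Proof. by rewrite -(sum_avgv R) big1 // => a _; rewrite ffunE /avg varpi_R mul0r. Qed.

Lemma coweight_w'_diff a b : (a <= b)%N -> sameblk Pw a b ->
  varpi (w' a) - varpi (w' b) = ((w' a <= i) && (i < w' b))%N%:R.
Proof.
move=> ab sab; apply: coweight_diff.
  exact: (w'_incr hW hu w'E ab sab).
exact: (w'_sameblk_R hu w'E sab).
Qed.

Lemma psum_mu_eq0_coweight : psum mu i = 0 <-> in_w_aG Pw w' varpi.
Proof.
split=> [psum0 | [y [y_const _] varpiE]].
  have sep_eq a b : (a <= b)%N -> sameblk Pw a b -> (w' a <= i)%N = (w' b <= i)%N.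
    move=> ab sab; have [sSw | nsSw] := boolP (sameblk Sw a b).
      exact: sameblk_prefix (paraw_sameblk sSw) iQ.
    apply: (sum_mu_eq0_inv (@prefix_down_closed i) psum0).
    rewrite /rho_root sab nsSw /= andbT ltn_neqAle ab andbT.
    by apply: contraNneq nsSw => /val_inj ->; exact: sameblk_refl.
  have varpi_w' a b : (a <= b)%N -> sameblk Pw a b -> varpi (w' a) = varpi (w' b).
    move=> ab sab; apply/eqP; rewrite -subr_eq0 coweight_w'_diff //.
    by rewrite (sep_eq a b ab sab) ltnNge andbN.
  exists [ffun a => varpi (w' a)]; last by apply/ffunP => a; rewrite !ffunE permKV.
  split=> [a b sab|].
    rewrite !ffunE; have [ab | ba] := leqP a b; first exact: varpi_w'.
    by apply/esym/varpi_w'; rewrite 1?sameblkC // ltnW.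
  transitivity (\sum_a varpi a); last exact: coweight_sum.
  by rewrite [RHS](reindex_inj (@perm_inj _ w')); apply: eq_bigr => a _; rewrite ffunE.
apply: sum_mu_eq0 => a b /and3P[ab sab _].
have := coweight_w'_diff (ltnW ab) sab; rewrite varpiE !ffunE !permK (y_const a b sab) subrr.
move/esym/eqP; rewrite pnatr_eq0 eqb0; have := w'_incr hW hu w'E (ltnW ab) sab.
by case: (leqP (w' a) i); case: (leqP (w' b) i) => //=; lia.
Qed.

End Coweight.

Lemma mu_eq0 : Pw = Sw -> mu = 0.
Proof.
move=> PwSw; apply/ffunP => a; rewrite !ffunE big1 ?ffunE ?mulr0 ?oppr0 ?mul0r // => b _.
by rewrite big1 // => c /and3P[_]; rewrite PwSw => ->.
Qed.

Lemma proj_mu_eq0 : proj Q R mu = 0 <-> Pw = Sw.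
Proof.
split=> [proj0 | /mu_eq0 mu0].
  apply/eqP; rewrite eqEsubset (Sw_sub_Pw hu w'E QR) andbT; apply/subsetP => j jPw.
  apply/negPn/negP => jSw; have [i iQ gap] := psum_mu_gap jPw jSw.
  have psum0 : psum mu i = 0 by rewrite -dot_prefix -(avgv_prefix K iQ) -dot_proj_mu proj0 dot0l.
  by move: gap; rewrite psum0 oppr_ge0 leNgt c1_gt0.
rewrite proj_mu mu0; apply/ffunP => a; rewrite !ffunE.
by apply: avg_const => k _; rewrite ffunE.
Qed.

Lemma dot_proj_mu_le T : dominant T -> Pw != Sw -> dot (proj Q R mu) T <= - c1 * dmin T.
Proof.
move=> domT PwSw.
have [j jPw jSw] : exists2 j, j \in Pw & j \notin Sw.
  by apply/subsetPn; move: PwSw; rewrite eqEsubset (Sw_sub_Pw hu w'E QR) andbT.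
have [i iQ gap] := psum_mu_gap jPw jSw.
have domTQ := avgv_dominant Q domT.
rewrite dot_proj_mu dot_by_parts sumr_mu_eq0 mul0r addr0 (bigD1 i) //= -dot_alpha.
have others : \sum_(k | k != i) psum mu k * dot (alpha K k) (avgv Q T) <= 0.
  by apply: sumr_le0 => k _; rewrite mulr_le0_ge0 ?psum_mu_le0.
under [X in _ + X <= _]eq_bigr do rewrite -dot_alpha.
apply: le_trans (lerD (lexx _) others) _; rewrite addr0.
apply: le_trans (ler_wpM2r (domTQ i) gap) _.
apply: ler_wnM2l; first by rewrite oppr_le0 ltW ?c1_gt0.
exact: le_trans (dmin_le T i) (dot_alpha_avgv_ge domT iQ).
Qed.

End Exponent.

Lemma disc_data_r_gt0 n (P Dpi : {set 'I_n}) r : disc_data P Dpi r -> forall a, (0 < r a)%N.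
Proof. by case=> _ _ r_card a; rewrite -r_card block_card_gt0. Qed.

Lemma disc_data_r_le n (P Dpi : {set 'I_n}) r : disc_data P Dpi r -> forall a, (r a <= n.+1)%N.
Proof. by case=> _ _ r_card a; rewrite -r_card (leq_trans (max_card _)) ?card_ord. Qed.

Unset Implicit Arguments.

Theorem mainTheorem11 (K : realFieldType) (n : nat)
    (P Dpi : {set 'I_n}) (r : 'I_n.+1 -> nat)
    (R : {set 'I_n}) (w : {perm 'I_n.+1}) :
  disc_data P Dpi r -> Wdc R P w ->
  let Rw := paraw R P (w^-1)%g in
  let Pw := paraw P R w in
  (forall (Q : {set 'I_n}) (w' : {perm 'I_n.+1}),
     Q \subset R -> rightmul (WdcR R Q Rw) w w' -> Dpi \subset paraw P Q w' ->
     let mu : vec K n := wact w' (nu K r (paraw P Q w') Pw) in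
     (forall varpi, is_coweight Q R varpi ->
        dot mu varpi <= 0 /\ (dot mu varpi = 0 <-> in_w_aG Pw w' varpi))
     /\ ((Pw = paraw P Q w' <-> proj Q R mu = 0)
         /\ (proj Q R mu = 0 <-> rightmul (WRSQ R Rw Q) w w')))
  /\
  (exists2 c1 : K, 0 < c1 &
     forall (T : vec K n), dominant T ->
     forall (Q : {set 'I_n}) (w' : {perm 'I_n.+1}),
       Q \subset R -> rightmul (WdcR R Q Rw) w w' -> ~ rightmul (WRSQ R Rw Q) w w' ->
       Dpi \subset paraw P Q w' ->
       dot (proj Q R (wact w' (nu K r (paraw P Q w') Pw))) T <= - c1 * dmin T).
Proof.
move=> disc hW Rw Pw; rewrite {}/Rw {}/Pw.
have [_ r_const _] := disc.
have r_gt0 := disc_data_r_gt0 disc; have r_le := disc_data_r_le disc.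
split=> [Q w' QR [u hu w'E] _ | ].
  have proj0 := proj_mu_eq0 K hW hu w'E QR r_const r_gt0 r_le.
  split; last split.
  - move=> varpi [i iRQ [[varpi_Q varpi_R] varpi_dual]].
    rewrite (dot_mu_coweight hu w'E r_const iRQ varpi_Q varpi_dual).
    split; first exact: psum_mu_le0 hW hu w'E QR r_const i.
    exact: (psum_mu_eq0_coweight hW hu w'E QR r_const r_gt0 iRQ varpi_Q varpi_R varpi_dual).
  - exact: iff_sym proj0.
  - exact: iff_trans proj0 (Pw_eq_Sw_WRSQ hW hu w'E QR).
exists (c1 K n) => [|T domT Q w' QR [u hu w'E] notWRSQ _]; first exact: c1_gt0.
apply: (dot_proj_mu_le hW hu w'E QR r_const r_gt0 r_le domT).
by apply/eqP => /(Pw_eq_Sw_WRSQ hW hu w'E QR).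
Qed.
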